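(* Let $p$ be a prime. The inclusion $\iota_0:\mathcal A_p\langle1\rangle_*\to\mathcal A_{p*}$ and, for every $k\ge1$, the inclusion $\iota_k:\mathcal A_p\langle k+1\rangle_*\to\mathcal A_p\langle k\rangle_*$ are faithfully flat.
   Context: Dual Steenrod algebra: $\mathcal A_{2*}=\mathbb F_2[\zeta_1,\zeta_2,\dots]$ ($\deg\zeta_i=2^i-1$); for odd $p$, $\mathcal A_{p*}=E(\tau_0,\tau_1,\dots)\otimes\mathbb F_p[\xi_1,\xi_2,\dots]$ ($\deg\tau_i=2p^i-1$, $\deg\xi_i=2(p^i-1)$), $E$ denoting an exterior algebra. $\mathcal A_p\langle k\rangle_*$ ($k\ge1$) is the subalgebra $\mathbb F_2[\zeta_1^{2^k},\zeta_2^{2^k},\dots]$ if $p=2$; $E(\tau_0)\otimes\mathbb F_p[\xi_1^p,\xi_2^p,\dots]$ if $p$ odd and $k=1$; $\mathbb F_p[\xi_1^{p^k},\xi_2^{p^k},\dots]$ if $p$ odd and $k\ge2$. *)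

From HB Require Import structures.
From mathcomp Require Import all_boot all_algebra.
From mathcomp Require Import finmap.
From mathcomp.multinomials Require Import monalg.

Set Implicit Arguments.
Unset Strict Implicit.
Unset Printing Implicit Defensive.

Import GRing.Theory.
Local Open Scope ring_scope.

Section Tensor.
Variables (R : zmodType) (mul : R -> R -> R) (one : R).

Definition is_lmod_over (S : R -> Prop) (N : zmodType) (act : R -> N -> N) :=
  [/\ forall s x y, S s -> act s (x + y) = act s x + act s y,
      forall s t x, S s -> S t -> act (s + t) x = act s x + act t x,
      forall s t x, S s -> S t -> act (mul s t) x = act s (act t x)
    & forall x, act one x = x].

Definition is_lin_over (S : R -> Prop) (N1 N2 : zmodType)
    (act1 : R -> N1 -> N1) (act2 : R -> N2 -> N2) (f : N1 -> N2) :=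
  (forall x y, f (x + y) = f x + f y) /\
  (forall s x, S s -> f (act1 s x) = act2 s (f x)).

(* The tensor product M (x)_S N of the right S-module M (right action   *)
(* given by [mul]) with the left S-module N is the quotient of the free  *)
(* abelian group on M x N (elements of {malg int[R * N]} supported on    *)
(* M x N) by the subgroup generated by the bilinearity / balancing       *)
(* relations.  [tens0] is membership in that subgroup, i.e. vanishing in *)
(* M (x)_S N. *)
Definition supp_in (M : R -> Prop) (N : zmodType) (x : {malg int[(R * N)%type]}) :=
  forall k, k \in msupp x -> M k.1.

Inductive tens0 (M S : R -> Prop) (N : zmodType) (act : R -> N -> N) :
    {malg int[(R * N)%type]} -> Prop :=
  | tens0_zero : tens0 M S act 0
  | tens0_add x y : tens0 M S act x -> tens0 M S act y -> tens0 M S act (x + y)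
  | tens0_opp x : tens0 M S act x -> tens0 M S act (- x)
  | tens0_addl a a' n : M a -> M a' ->
      tens0 M S act (<< (a + a', n) >> - << (a, n) >> - << (a', n) >>)
  | tens0_addr a n n' : M a ->
      tens0 M S act (<< (a, n + n') >> - << (a, n) >> - << (a, n') >>)
  | tens0_bal a s n : M a -> S s ->
      tens0 M S act (<< (mul a s, n) >> - << (a, act s n) >>).

Definition tens_map (N1 N2 : zmodType) (f : N1 -> N2)
    (x : {malg int[(R * N1)%type]}) : {malg int[(R * N2)%type]} :=
  \sum_(k <- msupp x) << x@_k *g (k.1, f k.2) >>.

Definition flat_over (M S : R -> Prop) :=
  forall (N1 N2 : zmodType) (act1 : R -> N1 -> N1) (act2 : R -> N2 -> N2)
         (f : N1 -> N2),
    is_lmod_over S act1 -> is_lmod_over S act2 ->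
    is_lin_over S act1 act2 f -> injective f ->
    forall x, supp_in M x -> tens0 M S act2 (tens_map f x) -> tens0 M S act1 x.

Definition faithfully_flat_over (M S : R -> Prop) :=
  flat_over M S /\
  forall (N : zmodType) (act : R -> N -> N), is_lmod_over S act ->
    (forall x, supp_in M x -> tens0 M S act x) -> forall n : N, n = 0.

Inductive gen_subring (G : R -> Prop) : R -> Prop :=
  | gen_base x : G x -> gen_subring G x
  | gen_zero : gen_subring G 0
  | gen_one : gen_subring G one
  | gen_add x y : gen_subring G x -> gen_subring G y -> gen_subring G (x + y)
  | gen_opp x : gen_subring G x -> gen_subring G (- x)
  | gen_mul x y : gen_subring G x -> gen_subring G y -> gen_subring G (mul x y).

End Tensor.

(* A monomial is a pair (E, m) with E a finite set of exterior indices  *)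
(* (tau^E = tau_{e1} ... tau_{er}, e1 < ... < er) and m a commutative   *)
(* monomial in polynomial generators indexed by nat.                     *)

Definition smon := ({fset nat} * {cmonom nat})%type.

(* number of transpositions needed to sort tau^E1 tau^E2 *)
Definition ext_cross (E1 E2 : {fset nat}) : nat :=
  (\sum_(i <- E1) \sum_(j <- E2) (j < i)%N)%N.

Notation stAp p := {malg 'F_p[smon]}.

Section DualSteenrodCarrier.
Variable p : nat.

Local Notation stA := (stAp p).

(* tau^E1 x^m1 * tau^E2 x^m2 = sign * tau^(E1 u E2) x^(m1 m2), sign = 0  *)
(* if E1, E2 overlap (tau_i^2 = 0).                                      *)
Definition smon_sign (m1 m2 : smon) : 'F_p :=
  if (m1.1 `&` m2.1)%fset == fset0 then (-1) ^+ ext_cross m1.1 m2.1 else 0.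

Definition smon_mul (m1 m2 : smon) : smon :=
  ((m1.1 `|` m2.1)%fset, mmul m1.2 m2.2).

Definition stmul (f g : stA) : stA :=
  \sum_(m1 <- msupp f) \sum_(m2 <- msupp g)
     << smon_sign m1 m2 * f@_m1 * g@_m2 *g smon_mul m1 m2 >>.

Definition stone : stA := << ((fset0 : {fset nat}), mone) >>.

Definition stpow (x : stA) (n : nat) : stA := iter n (stmul x) stone.

Definition ttau (i : nat) : stA := << ([fset i]%fset, mone) >>.
Definition txi (i : nat) : stA := << ((fset0 : {fset nat}), ucm i) >>.

Definition st_sub (G : stA -> Prop) : stA -> Prop := gen_subring stmul stone G.

(* The dual Steenrod algebra A_{p*}:  F_2[zeta_1, zeta_2, ...] if p = 2  *)
(* (zeta_i = x_i);  E(tau_0, tau_1, ...) (x) F_p[xi_1, xi_2, ...] if p   *)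
(* is odd (xi_i = x_i).                                                   *)
Definition dualSteenrod : stA -> Prop :=
  st_sub (fun a => if p == 2%N then exists2 i, (1 <= i)%N & a = txi i
                   else (exists i, a = ttau i) \/
                        (exists2 i, (1 <= i)%N & a = txi i)).

Definition dualSteenrodk (k : nat) : stA -> Prop :=
  st_sub (fun a =>
    if p == 2%N then exists2 i, (1 <= i)%N & a = stpow (txi i) (2 ^ k)
    else if k == 1%N then a = ttau 0 \/
                          (exists2 i, (1 <= i)%N & a = stpow (txi i) p)
    else exists2 i, (1 <= i)%N & a = stpow (txi i) (p ^ k)).

End DualSteenrodCarrier.

(* Each inclusion has the form S <= M, where M is spanned by the monomials
   tau^E xi^m with E inside a set E_M of indices and all exponents divisible by
   d_M, and S likewise for E_S <= E_M and d_M | d_S.  Every monomial of M splits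
   as a "low" part (exponents reduced mod d_S, no tau_i with i in E_S) times a
   "high" monomial of S; sending a to its high parts, sorted by low part and
   corrected by the Koszul sign, gives S-linear coordinate maps c_b with
   a = sum_b b * c_b(a).  Such a dual basis makes M (x)_S N a retract of a sum of
   copies of N: the maps a (x) n |-> c_b(a) n recover every element of
   M (x)_S N, commute with id (x) f, and the coordinate at b = 1 sends 1 (x) n to
   n.  This yields flatness and faithfulness. *)

From HB Require Import structures.
From mathcomp Require Import all_boot all_algebra.
From mathcomp Require Import finmap.
From mathcomp.multinomials Require Import monalg.
From mathcomp Require Import ring.

Set Implicit Arguments.
Unset Strict Implicit.
Unset Printing Implicit Defensive.
Import GRing.Theory.
Local Open Scope ring_scope.

Lemma zmod_morphism_of_addD (U V : zmodType) (f : U -> V) :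
  {morph f : x y / x + y} -> zmod_morphism f.
Proof. by move=> fD x y; apply: (addrI (f y)); rewrite -fD [y + _]addrC [f y + _]addrC !subrK. Qed.

Section FreeAbelianExtension.
Variables (K : choiceType) (N : zmodType) (g : K -> N).

Definition zext (x : {malg int[K]}) : N := \sum_(k <- msupp x) g k *~ x@_k.

Lemma zextEw (d : {fset K}) x : (msupp x `<=` d)%fset ->
  zext x = \sum_(k <- d) g k *~ x@_k.
Proof.
move=> le; rewrite /zext (big_fset_incl _ le) // => k _ /mcoeff_outdom ->.
by rewrite mulr0z.
Qed.

Lemma zext_is_zmod_morphism : zmod_morphism zext.
Proof.
move=> x y; set d := (msupp x `|` msupp y)%fset.
rewrite (@zextEw d) ?msuppB_le // (@zextEw d x) ?fsubsetUl // (@zextEw d y) ?fsubsetUr //.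
by rewrite -sumrB; apply: eq_bigr => k _; rewrite mcoeffB mulrzBr.
Qed.

HB.instance Definition _ :=
  GRing.isZmodMorphism.Build {malg int[K]} N zext zext_is_zmod_morphism.

Lemma zextU z k : zext << z *g k >> = g k *~ z.
Proof. by rewrite (@zextEw [fset k]%fset) ?msuppU_le // big_seq_fset1 mcoeffUU. Qed.

End FreeAbelianExtension.

Lemma malgUz (K : choiceType) (z : int) (k : K) : << z *g k >> = << k >> *~ z.
Proof. by rewrite -raddfMz /= intz. Qed.

Section DualBasis.
Variables (R : zmodType) (mul : R -> R -> R) (one : R) (M S : R -> Prop).
Variables (B : choiceType) (basis : B -> R) (coord : B -> R -> R)
  (coord_supp : R -> {fset B}).
Hypotheses (M0 : M 0) (MD : forall a a', M a -> M a' -> M (a + a'))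
  (M_mulS : forall a s, M a -> S s -> M (mul a s)).
Hypotheses (M_basis : forall b, M (basis b))
  (S_coord : forall b a, M a -> S (coord b a))
  (coordD : forall b a a', M a -> M a' -> coord b (a + a') = coord b a + coord b a')
  (coordM : forall b a s, M a -> S s -> coord b (mul a s) = mul (coord b a) s)
  (basis_expansion : forall a (L : {fset B}), M a -> (coord_supp a `<=` L)%fset ->
     a = \sum_(b <- L) mul (basis b) (coord b a)).

Section TensorCoordinates.
Variables (N : zmodType) (act : R -> N -> N).
Hypothesis act_lmod : is_lmod_over mul one S act.

Local Notation tens0 := (tens0 mul M S act).

Lemma actDl s t n : S s -> S t -> act (s + t) n = act s n + act t n.
Proof. by case: act_lmod => _ h _ _; apply: h. Qed.

Lemma actDr s n n' : S s -> act s (n + n') = act s n + act s n'.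
Proof. by case: act_lmod => h _ _ _; apply: h. Qed.

Lemma actM s t n : S s -> S t -> act (mul s t) n = act s (act t n).
Proof. by case: act_lmod => _ _ h _; apply: h. Qed.

Lemma act1 n : act one n = n.
Proof. by case: act_lmod. Qed.

Definition tens_coord b : {malg int[(R * N)%type]} -> N :=
  zext (fun k : R * N => act (coord b k.1) k.2).

Lemma tens_coord_tens0 b x : tens0 x -> tens_coord b x = 0.
Proof.
rewrite /tens_coord; elim=> {x} [|x y _ hx _ hy|x _ hx|a a' n Ma Ma'|a n n' Ma|a s n Ma Ss].
- exact: raddf0.
- by rewrite raddfD /= hx hy addr0.
- by rewrite raddfN /= hx oppr0.
- by rewrite !raddfB /= !zextU !mulr1z /= coordD //
    (actDl _ (S_coord b Ma) (S_coord b Ma')) -addrA -opprD subrr.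
- by rewrite !raddfB /= !zextU !mulr1z /= (actDr _ _ (S_coord b Ma)) -addrA -opprD subrr.
- by rewrite !raddfB /= !zextU !mulr1z /= coordM // (actM _ (S_coord b Ma) Ss) subrr.
Qed.

Definition tens_eq x y := tens0 (x - y).

Lemma tens_eq_refl x : tens_eq x x.
Proof. by rewrite /tens_eq subrr; apply: tens0_zero. Qed.

Lemma tens_eq_sym x y : tens_eq x y -> tens_eq y x.
Proof. by rewrite /tens_eq => h; rewrite -opprB; apply: tens0_opp. Qed.

Lemma tens_eq_trans y x z : tens_eq x y -> tens_eq y z -> tens_eq x z.
Proof. by rewrite /tens_eq -[x - z](subrKA y); apply: tens0_add. Qed.

Lemma tens_eqD x y x' y' : tens_eq x y -> tens_eq x' y' -> tens_eq (x + x') (y + y').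
Proof. by rewrite /tens_eq opprD addrACA; apply: tens0_add. Qed.

Lemma tens_eqN x y : tens_eq x y -> tens_eq (- x) (- y).
Proof. by rewrite /tens_eq -opprD; apply: tens0_opp. Qed.

Lemma tens_eqMz x y z : tens_eq x y -> tens_eq (x *~ z) (y *~ z).
Proof.
have eqMn n : tens_eq x y -> tens_eq (x *+ n) (y *+ n).
  move=> exy; elim: n => [|n IH]; first by rewrite !mulr0n; apply: tens_eq_refl.
  by rewrite !mulrS; apply: tens_eqD.
by case: z => n exy; rewrite ?NegzE ?mulrNz; [|apply: tens_eqN]; apply: eqMn.
Qed.

Lemma tens_eq_sum (I : eqType) (r : seq I) (F G : I -> {malg int[(R * N)%type]}) :
  (forall i, i \in r -> tens_eq (F i) (G i)) ->
  tens_eq (\sum_(i <- r) F i) (\sum_(i <- r) G i).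
Proof.
move=> h; rewrite big_seq [X in tens_eq _ X]big_seq.
by apply: (big_ind2 tens_eq) => //; [exact: tens_eq_refl | exact: tens_eqD].
Qed.

Lemma tens_eq_tens0 x : tens_eq x 0 <-> tens0 x.
Proof. by rewrite /tens_eq subr0. Qed.

Lemma tens_eq_addl a a' n : M a -> M a' ->
  tens_eq << (a + a', n) >> (<< (a, n) >> + << (a', n) >>).
Proof. by move=> Ma Ma'; rewrite /tens_eq opprD addrA; apply: tens0_addl. Qed.

Lemma tens_eq_addr a n n' : M a ->
  tens_eq << (a, n + n') >> (<< (a, n) >> + << (a, n') >>).
Proof. by move=> Ma; rewrite /tens_eq opprD addrA; apply: tens0_addr. Qed.

Lemma tens0_double x : tens_eq x (x + x) -> tens0 x.
Proof. by rewrite /tens_eq opprD addrA subrr sub0r => /tens0_opp; rewrite opprK. Qed.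

Lemma tens0_l0 n : tens0 << (0, n) >>.
Proof. by apply/tens0_double; have := tens_eq_addl n M0 M0; rewrite addr0. Qed.

Lemma tens0_r0 a : M a -> tens0 << (a, 0) >>.
Proof. by move=> Ma; apply/tens0_double; have := tens_eq_addr 0 0 Ma; rewrite addr0. Qed.

Lemma tens_eq_lsum n (I : Type) (r : seq I) (F : I -> R) : (forall i, M (F i)) ->
  tens_eq << (\sum_(i <- r) F i, n) >> (\sum_(i <- r) << (F i, n) >>).
Proof.
move=> MF; elim: r => [|i r IH]; first by rewrite !big_nil; apply/tens_eq_tens0/tens0_l0.
have Mr : M (\sum_(j <- r) F j) by apply: big_rec => // j a _; apply: MD.
rewrite !big_cons; apply: tens_eq_trans (tens_eq_addl _ _ _) _ => //.
by apply: tens_eqD IH; apply: tens_eq_refl.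
Qed.

Lemma tens_eq_rsum a (I : Type) (r : seq I) (F : I -> N) : M a ->
  tens_eq << (a, \sum_(i <- r) F i) >> (\sum_(i <- r) << (a, F i) >>).
Proof.
move=> Ma; elim: r => [|i r IH]; first by rewrite !big_nil; apply/tens_eq_tens0/tens0_r0.
rewrite !big_cons; apply: tens_eq_trans (tens_eq_addr _ _ Ma) _.
by apply: tens_eqD IH; apply: tens_eq_refl.
Qed.

Lemma tens_eq_rN a n : M a -> tens_eq << (a, - n) >> (- << (a, n) >>).
Proof.
move=> Ma; rewrite /tens_eq opprK addrC -[_ + _]subr0.
apply: (@tens_eq_trans << (a, 0) >>); last exact/tens_eq_tens0/tens0_r0.
by apply: tens_eq_sym; rewrite -{1}(subrr n); apply: tens_eq_addr.
Qed.

Lemma tens_eq_rMz a n z : M a -> tens_eq << (a, n *~ z) >> (<< (a, n) >> *~ z).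
Proof.
move=> Ma; have eqMn m : tens_eq << (a, n *+ m) >> (<< (a, n) >> *+ m).
  elim: m => [|m IH]; first by rewrite !mulr0n; apply/tens_eq_tens0/tens0_r0.
  by rewrite !mulrS; apply: tens_eq_trans (tens_eq_addr _ _ Ma) (tens_eqD (tens_eq_refl _) IH).
case: z => m; first exact: eqMn.
by rewrite NegzE !mulrNz; apply: tens_eq_trans (tens_eq_rN _ Ma) (tens_eqN (eqMn _)).
Qed.

Lemma tens_eq_expansion a n (L : {fset B}) : M a -> (coord_supp a `<=` L)%fset ->
  tens_eq << (a, n) >> (\sum_(b <- L) << (basis b, act (coord b a) n) >>).
Proof.
move=> Ma sub; rewrite {1}(basis_expansion Ma sub).
apply: tens_eq_trans (tens_eq_lsum _ _ _) _ => [b|].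
  exact: M_mulS (M_basis b) (S_coord b Ma).
by apply: tens_eq_sum => b _; apply: tens0_bal; [apply: M_basis | apply: S_coord].
Qed.

Lemma tens_eq_coord_expansion x : supp_in M x ->
  tens_eq x (\sum_(b <- \bigcup_(k <- msupp x) coord_supp k.1)
               << (basis b, tens_coord b x) >>)%fset.
Proof.
move=> sx; set L := (\bigcup_(k <- msupp x) coord_supp k.1)%fset.
apply: tens_eq_sym; apply: (@tens_eq_trans
  (\sum_(b <- L) \sum_(k <- msupp x) << (basis b, act (coord b k.1) k.2) >> *~ x@_k)).
  apply: tens_eq_sum => b _; rewrite /tens_coord /zext.
  apply: tens_eq_trans (tens_eq_rsum _ _ (M_basis b)) _.
  by apply: tens_eq_sum => k _; apply: tens_eq_rMz.
rewrite exchange_big /= [X in tens_eq _ X]monalgE.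
apply: tens_eq_sum => -[a n] kx; rewrite malgUz -mulrz_suml; apply: tens_eqMz.
apply/tens_eq_sym/tens_eq_expansion; first exact: sx kx.
exact: (bigfcup_sup (fun k : R * N => coord_supp k.1) kx (isT : xpredT (a, n))).
Qed.

End TensorCoordinates.

Lemma tens_coord_tens_map (N1 N2 : zmodType) (act1 : R -> N1 -> N1)
    (act2 : R -> N2 -> N2) (f : N1 -> N2) :
  is_lin_over S act1 act2 f -> forall b x, supp_in M x ->
  tens_coord act2 b (tens_map f x) = f (tens_coord act1 b x).
Proof.
case=> fD f_lin b x sx.
pose fA : {additive N1 -> N2} :=
  HB.pack f (GRing.isZmodMorphism.Build N1 N2 f (zmod_morphism_of_addD fD)).
have fMz n z : f (n *~ z) = f n *~ z := raddfMz fA z n.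
have f_sum (I : Type) (r : seq I) (F : I -> N1) :
  f (\sum_(i <- r) F i) = \sum_(i <- r) f (F i) by exact: (raddf_sum fA).
rewrite /tens_map /tens_coord raddf_sum /= [in RHS]/zext f_sum big_seq [RHS]big_seq.
apply: eq_bigr => k kx; rewrite zextU fMz /= f_lin //.
exact: S_coord (sx _ kx).
Qed.

Hypotheses (M1 : M one) (b1 : B) (coord1 : coord b1 one = one).

Theorem dual_basis_faithfully_flat : faithfully_flat_over mul one M S.
Proof.
split=> [N1 N2 act1 act2 f lmod1 lmod2 f_lin f_inj x sx /(tens_coord_tens0 lmod2) fx0
        |N act lmod tens_trivial n].
  have f0 : f 0 = 0 by case: f_lin => fD _; apply: (addIr (f 0)); rewrite -fD !add0r.
  have coord0 b : tens_coord act1 b x = 0.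
    by apply: f_inj; rewrite -(tens_coord_tens_map f_lin _ sx) f0 fx0.
  apply/tens_eq_tens0; apply: tens_eq_trans (tens_eq_coord_expansion act1 sx) _.
  apply: tens_eq_trans (tens_eq_sum (G := fun=> 0) _) _ => [b _|].
    by rewrite coord0; apply/tens_eq_tens0/tens0_r0.
  by rewrite big1 //; apply: tens_eq_refl.
have sx : supp_in M << (one, n) >>.
  by move=> k /(fsubsetP msuppU_le); rewrite inE => /eqP ->.
have := tens_coord_tens0 lmod b1 (tens_trivial _ sx).
by rewrite /tens_coord zextU mulr1z /= coord1 act1.
Qed.

End DualBasis.

Section LinearExtension.
Variables (R : ringType) (K : choiceType) (V : lmodType R) (h : K -> V).

Definition mlin (x : {malg R[K]}) : V := \sum_(k <- msupp x) x@_k *: h k.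

Lemma mlinEw (d : {fset K}) x : (msupp x `<=` d)%fset ->
  mlin x = \sum_(k <- d) x@_k *: h k.
Proof.
move=> le; rewrite /mlin (big_fset_incl _ le) // => k _ /mcoeff_outdom ->.
by rewrite scale0r.
Qed.

Lemma mlin_is_linear : linear mlin.
Proof.
move=> c x y; set d := (msupp x `|` msupp y)%fset.
have le_cxy : (msupp (c *: x + y) `<=` d)%fset.
  apply: fsubset_trans (msuppD_le _ _) _; rewrite fsubUset fsubsetUr andbT.
  exact: fsubset_trans (msuppZ_le _ _) (fsubsetUl _ _).
rewrite (mlinEw le_cxy) (@mlinEw d x) ?fsubsetUl // (@mlinEw d y) ?fsubsetUr //.
rewrite scaler_sumr -big_split; apply: eq_bigr => k _.
by rewrite mcoeffD mcoeffZ scalerDl scalerA.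
Qed.

HB.instance Definition _ :=
  GRing.isLinear.Build R {malg R[K]} V *:%R mlin mlin_is_linear.

Lemma mlinU c k : mlin << c *g k >> = c *: h k.
Proof. by rewrite (@mlinEw [fset k]%fset) ?msuppU_le // big_seq_fset1 mcoeffUU. Qed.

End LinearExtension.

Lemma malgUZ (R : ringType) (K : choiceType) (c : R) (k : K) :
  << c *g k >> = c *: << k >>.
Proof.
by apply/malgP => k'; rewrite mcoeffZ !mcoeffU; case: eqP; rewrite ?mulr1 ?mulr0.
Qed.

Lemma scale_malgU (R : ringType) (K : choiceType) (c c' : R) (k : K) :
  c *: << c' *g k >> = << c * c' *g k >>.
Proof. by rewrite malgUZ [RHS]malgUZ scalerA. Qed.

Lemma big_fsetU_disjoint (R : Type) (idx : R) (op : Monoid.com_law idx)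
    (I : choiceType) (A B : {fset I}) (F : I -> R) :
  (A `&` B == fset0)%fset ->
  \big[op/idx]_(i <- (A `|` B)%fset) F i =
    op (\big[op/idx]_(i <- A) F i) (\big[op/idx]_(i <- B) F i).
Proof.
move=> /eqP /fsetP AB0; rewrite (big_fsetID _ (mem A)).
have -> : [fset i in (A `|` B)%fset | mem A i]%fset = A.
  by apply/fsetP => i; rewrite !inE; case: (i \in A); rewrite ?andbT ?andbF.
have -> // : [fset i in (A `|` B)%fset | ~~ mem A i]%fset = B.
apply/fsetP => i; have := AB0 i; rewrite !inE.
by case: (i \in A); case: (i \in B).
Qed.

Section SteenrodMultiplication.
Variable p : nat.
Local Notation stA := (stAp p).
Local Notation sign := (smon_sign p).
Implicit Types (f g : stA) (c : 'F_p) (u v w : smon).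

Lemma stmulEw (d1 d2 : {fset smon}) f g :
  (msupp f `<=` d1)%fset -> (msupp g `<=` d2)%fset ->
  stmul f g = \sum_(m1 <- d1) \sum_(m2 <- d2)
     << sign m1 m2 * f@_m1 * g@_m2 *g smon_mul m1 m2 >>.
Proof.
move=> le1 le2; rewrite /stmul (big_fset_incl _ le1) => [|m1 _ /mcoeff_outdom ->].
  apply: eq_bigr => m1 _; rewrite (big_fset_incl _ le2) // => m2 _ /mcoeff_outdom ->.
  by rewrite mulr0 monalgU0.
by rewrite big1 // => m2 _; rewrite mulr0 mul0r monalgU0.
Qed.

Lemma stmulDl f f' g : stmul (f + f') g = stmul f g + stmul f' g.
Proof.
set d := (msupp f `|` msupp f')%fset.
rewrite (@stmulEw d (msupp g)) ?msuppD_le // (@stmulEw d (msupp g) f) ?fsubsetUl //.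
rewrite (@stmulEw d (msupp g) f') ?fsubsetUr // -big_split.
apply: eq_bigr => m1 _; rewrite -big_split; apply: eq_bigr => m2 _.
by rewrite mcoeffD mulrDr mulrDl monalgUD.
Qed.

Lemma stmulDr f g g' : stmul f (g + g') = stmul f g + stmul f g'.
Proof.
set d := (msupp g `|` msupp g')%fset.
rewrite (@stmulEw (msupp f) d) ?msuppD_le // (@stmulEw (msupp f) d f g) ?fsubsetUl //.
rewrite (@stmulEw (msupp f) d f g') ?fsubsetUr // -big_split.
apply: eq_bigr => m1 _; rewrite -big_split; apply: eq_bigr => m2 _.
by rewrite mcoeffD mulrDr monalgUD.
Qed.

Lemma stmulZl c f g : stmul (c *: f) g = c *: stmul f g.
Proof.
rewrite (@stmulEw (msupp f) (msupp g)) ?msuppZ_le // /stmul scaler_sumr.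
apply: eq_bigr => m1 _; rewrite scaler_sumr; apply: eq_bigr => m2 _.
rewrite mcoeffZ (_ : _ * (c * _) * _ = c * (sign m1 m2 * f@_m1 * g@_m2)); last by ring.
by rewrite malgUZ [in RHS]malgUZ scalerA.
Qed.

Lemma stmulZr c f g : stmul f (c *: g) = c *: stmul f g.
Proof.
rewrite (@stmulEw (msupp f) (msupp g)) ?msuppZ_le // /stmul scaler_sumr.
apply: eq_bigr => m1 _; rewrite scaler_sumr; apply: eq_bigr => m2 _.
rewrite mcoeffZ (_ : _ * (c * _) = c * (sign m1 m2 * f@_m1 * g@_m2)); last by ring.
by rewrite malgUZ [in RHS]malgUZ scalerA.
Qed.

Lemma stmul0l g : stmul 0 g = 0.
Proof. by rewrite /stmul msupp0 big_seq_fset0. Qed.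

Lemma stmul0r f : stmul f 0 = 0.
Proof. by rewrite /stmul msupp0 big1 // => m _; rewrite big_seq_fset0. Qed.

Lemma stmul_suml (I : Type) (r : seq I) (F : I -> stA) g :
  stmul (\sum_(i <- r) F i) g = \sum_(i <- r) stmul (F i) g.
Proof. by elim: r => [|i r IH]; rewrite ?big_nil ?stmul0l // !big_cons stmulDl IH. Qed.

Lemma stmul_sumr (I : Type) (r : seq I) (F : I -> stA) f :
  stmul f (\sum_(i <- r) F i) = \sum_(i <- r) stmul f (F i).
Proof. by elim: r => [|i r IH]; rewrite ?big_nil ?stmul0r // !big_cons stmulDr IH. Qed.

Lemma stmulUU c c' u v :
  stmul << c *g u >> << c' *g v >> = << sign u v * c * c' *g smon_mul u v >>.
Proof.
by rewrite (@stmulEw [fset u]%fset [fset v]%fset) ?msuppU_le // !big_seq_fset1 !mcoeffUU.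
Qed.

Lemma stmulU u v : stmul << u >> << v >> = sign u v *: << smon_mul u v >>.
Proof. by rewrite stmulUU !mulr1 malgUZ. Qed.

Lemma stmulE f g : stmul f g =
  \sum_(m1 <- msupp f) \sum_(m2 <- msupp g) (f@_m1 * g@_m2) *: stmul << m1 >> << m2 >>.
Proof.
apply: eq_bigr => m1 _; apply: eq_bigr => m2 _.
by rewrite stmulU scalerA malgUZ [f@_m1 * g@_m2 * _]mulrC mulrA.
Qed.

Lemma smon_sign_sqr u v : (u.1 `&` v.1 == fset0)%fset -> sign u v * sign u v = 1.
Proof. by move=> uv0; rewrite /smon_sign uv0 -exprMn mulrNN mulr1 expr1n. Qed.

Lemma ext_crossUl A B C : (A `&` B == fset0)%fset ->
  ext_cross (A `|` B)%fset C = (ext_cross A C + ext_cross B C)%N.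
Proof. by move=> AB0; rewrite /ext_cross big_fsetU_disjoint. Qed.

Lemma ext_crossUr A B C : (B `&` C == fset0)%fset ->
  ext_cross A (B `|` C)%fset = (ext_cross A B + ext_cross A C)%N.
Proof.
by move=> BC0; rewrite /ext_cross -big_split; apply: eq_bigr => i _; rewrite big_fsetU_disjoint.
Qed.

Lemma smon_sign_cocycle u v w :
  sign u v * sign (smon_mul u v) w = sign u (smon_mul v w) * sign v w.
Proof.
rewrite /smon_sign /= fsetIUl fsetIUr !fsetU_eq0.
case uv0: (u.1 `&` v.1 == fset0)%fset; case uw0: (u.1 `&` w.1 == fset0)%fset;
  case vw0: (v.1 `&` w.1 == fset0)%fset => /=; rewrite ?mul0r ?mulr0 //.
by rewrite ext_crossUl // ext_crossUr // !exprD mulrA.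
Qed.

End SteenrodMultiplication.

(* The polynomial generators of the algebras are x_1, x_2, ..., hence
   [m.2 0 == 0]. *)
Definition smon_in (E : pred nat) (d : nat) (m : smon) : bool :=
  [&& all E m.1, all (fun i => d %| m.2 i)%N (finsupp m.2) & m.2 0%N == 0%N].

Lemma smon_inP (E : pred nat) d (m : smon) : reflect
  [/\ forall i, i \in m.1 -> E i, forall i, (d %| m.2 i)%N & m.2 0%N = 0%N]
  (smon_in E d m).
Proof.
apply: (iffP and3P) => [[/allP E_m /allP d_m /eqP m0]|[E_m d_m m0]].
  split=> // i; have [->|m_i] := eqVneq (m.2 i) 0%N; first exact: dvdn0.
  by apply: d_m; rewrite -cmE_neq0.
by split; [apply/allP | apply/allP => i _; apply: d_m | apply/eqP].
Qed.

Lemma smon_in1 (E : pred nat) d : smon_in E d (fset0, mone).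
Proof. by apply/smon_inP; split=> [i|i|]; rewrite ?inE ?cm1. Qed.

Lemma smon_inM (E : pred nat) d (u v : smon) :
  smon_in E d u -> smon_in E d v -> smon_in E d (smon_mul u v).
Proof.
move=> /smon_inP[Eu du u0] /smon_inP[Ev dv v0]; apply/smon_inP.
split=> [i|i|]; rewrite /= ?inE ?cmM ?u0 ?v0 ?dvdn_add //.
by case/orP=> [/Eu|/Ev].
Qed.

Lemma smon_inS (E E' : pred nat) d d' (m : smon) : (forall i, E i -> E' i) -> (d' %| d)%N ->
  smon_in E d m -> smon_in E' d' m.
Proof.
move=> EE' d'd /smon_inP[Em dm m0]; apply/smon_inP.
by split=> // i; [move/Em/EE' | apply: dvdn_trans d'd (dm i)].
Qed.

Section MonomialSplitting.
Variables (E : pred nat) (d : nat).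
Implicit Types (m s : smon) (EM : pred nat).

Definition smon_low (m : smon) : smon :=
  ([fset i in m.1 | ~~ E i]%fset, [cmonom (m.2 i %% d)%N | i in finsupp m.2]%M).

Definition smon_high (m : smon) : smon :=
  ([fset i in m.1 | E i]%fset, [cmonom (m.2 i - m.2 i %% d)%N | i in finsupp m.2]%M).

Lemma smon_low2 m i : (smon_low m).2 i = (m.2 i %% d)%N.
Proof. by rewrite cmE fsfun_fun; case: finsuppP; rewrite ?mod0n. Qed.

Lemma smon_high2 m i : (smon_high m).2 i = (m.2 i - m.2 i %% d)%N.
Proof. by rewrite cmE fsfun_fun; case: finsuppP; rewrite ?mod0n. Qed.

Lemma smon_low1 : smon_low (fset0, mone) = (fset0, mone).
Proof.
apply: injective_projections; first by apply/fsetP => i; rewrite !inE.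
by apply/eqP/cmP => i; rewrite smon_low2 /= cm1 mod0n.
Qed.

Lemma smon_high1 : smon_high (fset0, mone) = (fset0, mone).
Proof.
apply: injective_projections; first by apply/fsetP => i; rewrite !inE.
by apply/eqP/cmP => i; rewrite smon_high2 /= cm1 mod0n.
Qed.

Lemma smon_low_high m : smon_mul (smon_low m) (smon_high m) = m.
Proof.
case: m => X n; congr (_, _).
  by apply/fsetP => i; rewrite /= !inE; case: (E i); rewrite ?andbT ?andbF ?orbF.
by apply/eqP/cmP => i; rewrite cmM smon_low2 smon_high2 subnKC ?leq_mod.
Qed.

Lemma smon_low_high_disjoint m : ((smon_low m).1 `&` (smon_high m).1 == fset0)%fset.
Proof. by apply/eqP/fsetP => i; rewrite !inE; case: (E i); rewrite ?andbT ?andbF. Qed.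

Lemma smon_low_disjoint m s : smon_in E d s -> ((smon_low m).1 `&` s.1 == fset0)%fset.
Proof.
case/smon_inP=> Es _ _; apply/eqP/fsetP => i; rewrite !inE.
by case: (boolP (i \in s.1)) => [/Es ->|]; rewrite ?andbF.
Qed.

Lemma smon_lowM m s : smon_in E d s -> smon_low (smon_mul m s) = smon_low m.
Proof.
case/smon_inP=> Es ds _; congr (_, _).
  apply/fsetP => i; rewrite /= !inE.
  by case: (boolP (i \in s.1)) => [/Es ->|]; rewrite ?andbF ?orbF.
by apply/eqP/cmP => i; rewrite !smon_low2 cmM -modnDmr (eqP (ds i)) addn0.
Qed.

Lemma smon_highM m s : smon_in E d s ->
  smon_high (smon_mul m s) = smon_mul (smon_high m) s.
Proof.
case/smon_inP=> Es ds _; congr (_, _).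
  apply/fsetP => i; rewrite /= !inE.
  by case: (boolP (i \in s.1)) => [/Es ->|]; rewrite ?andbT ?andbF ?orbT ?orbF.
apply/eqP/cmP => i; rewrite cmM !smon_high2 cmM -modnDmr (eqP (ds i)) addn0.
by rewrite addnBAC ?leq_mod.
Qed.

Lemma smon_in_high EM dM m : smon_in EM dM m -> smon_in E d (smon_high m).
Proof.
case/smon_inP=> _ _ m0; apply/smon_inP; split=> [i|i|].
- by rewrite !inE => /andP[].
- by rewrite smon_high2 {1}(divn_eq (m.2 i) d) addnK dvdn_mull.
- by rewrite smon_high2 m0.
Qed.

Lemma smon_in_low EM dM m : (dM %| d)%N ->
  smon_in EM dM m -> smon_in EM dM (smon_low m).
Proof.
move=> dMd /smon_inP[Em dm m0]; apply/smon_inP; split=> [i|i|].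
- by rewrite !inE => /andP[/Em].
- by rewrite smon_low2 /dvdn modn_dvdm //; apply: dm.
- by rewrite smon_low2 m0 mod0n.
Qed.

End MonomialSplitting.

Definition ucmX (i n : nat) : cmonom nat := iter n (mmul (ucm i)) mone.

Lemma ucmXE i n j : ucmX i n j = (n * (i == j))%N.
Proof. by elim: n => [|n IH]; rewrite /= ?cm1 // cmM IH cmU mulSn. Qed.

Lemma mdeg_ucmX i n : mdeg (ucmX i n) = n.
Proof. by elim: n => [|n IH]; rewrite /= ?mdeg1 // mdegM IH mdegU. Qed.

Lemma smon_in_ucmX (E : pred nat) d i : (0 < i)%N -> smon_in E d (fset0, ucmX i d).
Proof.
move=> i_gt0; apply/smon_inP; split=> [j|j|]; rewrite ?inE // ucmXE ?dvdn_mulr //.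
by rewrite (negPf (lt0n_neq0 i_gt0)) muln0.
Qed.

Lemma smon_in_tau (E : pred nat) d i : E i -> smon_in E d ([fset i]%fset, mone).
Proof. by move=> Ei; apply/smon_inP; split=> [j|j|]; rewrite ?inE ?cm1 // => /eqP ->. Qed.

Lemma smon_split_ucmX (E : pred nat) d (m : smon) i : (0 < d)%N ->
  smon_in E d m -> i \in finsupp m.2 ->
  exists2 m', smon_in E d m' & m = smon_mul m' (fset0, ucmX i d).
Proof.
move=> d_gt0 /smon_inP[Em dm m0] im; rewrite -cmE_neq0 in im.
have le_d_mi : (d <= m.2 i)%N by rewrite dvdn_leq ?lt0n.
exists (m.1, divcm m.2 (ucmX i d)).
  apply/smon_inP; split=> // [j|]; rewrite divcmE ucmXE ?dvdn_sub ?dvdn_mulr //.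
  by rewrite m0.
case: m Em dm m0 im le_d_mi => X n /= _ _ _ _ le_d_ni; rewrite /smon_mul /= fsetU0.
congr (_, _); apply/eqP/cmP => j; rewrite cmM divcmE ucmXE.
by case: eqVneq => [<-|_]; rewrite ?muln1 ?muln0 ?subn0 ?addn0 ?subnK.
Qed.

Lemma smon_split_tau (m : smon) i : i \in m.1 ->
  m = smon_mul ((m.1 `\ i)%fset, m.2) ([fset i]%fset, mone).
Proof.
case: m => X n /= iX; rewrite /smon_mul /= fsetUC fsetD1K //; congr (_, _).
by apply/eqP/cmP => j; rewrite cmM cm1 addn0.
Qed.

Section Span.
Variable p : nat.
Local Notation stA := (stAp p).
Local Notation gen G := (gen_subring (@stmul p) (stone p) G).
Implicit Types (f g : stA) (P : pred smon) (G : stA -> Prop).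

Definition msupp_in P f : Prop := forall m, m \in msupp f -> P m.

Lemma msupp_in0 P : msupp_in P 0.
Proof. by move=> m; rewrite msupp0 inE. Qed.

Lemma msupp_inD P f g : msupp_in P f -> msupp_in P g -> msupp_in P (f + g).
Proof. by move=> Pf Pg m /(fsubsetP (msuppD_le _ _)); rewrite inE => /orP[/Pf|/Pg]. Qed.

Lemma msupp_inZ P c f : msupp_in P f -> msupp_in P (c *: f).
Proof. by move=> Pf m /(fsubsetP (msuppZ_le _ _)) /Pf. Qed.

Lemma msupp_inU P c m : P m -> msupp_in P << c *g m >>.
Proof. by move=> Pm k /(fsubsetP msuppU_le); rewrite inE => /eqP ->. Qed.

Lemma msupp_in_sum P (I : Type) (r : seq I) (Q : pred I) (F : I -> stA) :
  (forall i, Q i -> msupp_in P (F i)) -> msupp_in P (\sum_(i <- r | Q i) F i).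
Proof. by move=> PF; apply: big_ind => //; [apply: msupp_in0 | apply: msupp_inD]. Qed.

Lemma msupp_in_mul P f g : (forall u v, P u -> P v -> P (smon_mul u v)) ->
  msupp_in P f -> msupp_in P g -> msupp_in P (stmul f g).
Proof.
move=> PM Pf Pg; rewrite /stmul big_seq; apply: msupp_in_sum => u /Pf Pu.
by rewrite big_seq; apply: msupp_in_sum => v /Pg Pv; apply/msupp_inU/PM.
Qed.

Lemma gen_sum G (I : Type) (r : seq I) (Q : pred I) (F : I -> stA) :
  (forall i, Q i -> gen G (F i)) -> gen G (\sum_(i <- r | Q i) F i).
Proof. by move=> GF; apply: big_ind => //; [apply: gen_zero | apply: gen_add]. Qed.

Lemma gen_scale G c f : gen G f -> gen G (c *: f).
Proof.
move=> Gf; rewrite -[c]natr_Zp scaler_nat.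
by elim: (val c) => [|n IH]; [apply: gen_zero | rewrite mulrS; apply: gen_add].
Qed.

Lemma gen_mulU G u v : gen G << u >> -> gen G << v >> ->
  (u.1 `&` v.1 == fset0)%fset -> gen G << smon_mul u v >>.
Proof.
move=> Gu Gv uv0; have := gen_scale (smon_sign p u v) (gen_mul Gu Gv).
by rewrite stmulU scalerA (smon_sign_sqr p uv0) scale1r.
Qed.

Lemma msupp_in_gen G P : (forall m, P m -> gen G << m >>) ->
  forall f, msupp_in P f -> gen G f.
Proof.
move=> PG f Pf; rewrite (monalgE f) big_seq; apply: gen_sum => m /Pf Pm.
by rewrite malgUZ; apply/gen_scale/PG.
Qed.

Lemma gen_msupp_in G P : P (fset0, mone) ->
  (forall u v, P u -> P v -> P (smon_mul u v)) -> (forall a, G a -> msupp_in P a) ->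
  forall f, gen G f -> msupp_in P f.
Proof.
move=> P1 PM GP f; elim=> {f} [a /GP //| |||x _ Px|x y _ Px _ Py].
- exact: msupp_in0.
- exact: msupp_inU.
- by move=> x y _ Px _ Py; apply: msupp_inD.
- by move=> m; rewrite msuppN; apply: Px.
- exact: msupp_in_mul.
Qed.

Lemma gen_smon_in G (E : pred nat) d : (0 < d)%N ->
  (forall i, E i -> gen G (ttau p i)) ->
  (forall i, (0 < i)%N -> gen G << (fset0, ucmX i d) >>) ->
  forall m, smon_in E d m -> gen G << m >>.
Proof.
move=> d_gt0 G_tau G_x m.
move: {2}(mdeg m.2 + #|` m.1|)%N (leqnn (mdeg m.2 + #|` m.1|)%N) => n.
elim: n m => [|n IH] m.
  rewrite leqn0 addn_eq0 mdeg_eq0 cardfs_eq0 => /andP[/eqP m2 /eqP m1] _.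
  by case: m m1 m2 => X c /= -> ->; apply: gen_one.
move=> size_m Em; have [m2|/fset0Pn[i im]] := eqVneq (finsupp m.2) fset0; last first.
  have [m' Em' def_m] := smon_split_ucmX d_gt0 Em im.
  have i_gt0 : (0 < i)%N.
    by rewrite lt0n; apply: contraTneq im => ->; case/smon_inP: Em => _ _ /eqP; rewrite cmE_eq0.
  rewrite def_m; apply: gen_mulU (G_x _ i_gt0) _; last by rewrite fsetI0.
  apply: IH Em'; rewrite -ltnS (leq_trans _ size_m) // def_m /= mdegM mdeg_ucmX.
  by rewrite fsetU0 ltn_add2r -[X in (X < _)%N]addn0 ltn_add2l.
have [X0|/fset0Pn[i iX]] := eqVneq m.1 fset0.
  have m2_1 : m.2 = mone.
    by apply/eqP/cmP => j; rewrite cm1; apply/eqP; rewrite cmE_eq0 m2 inE.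
  by case: m X0 m2_1 {size_m Em m2} => X c /= -> ->; apply: gen_one.
rewrite (smon_split_tau iX); apply: gen_mulU.
- apply: IH; last by case/smon_inP: Em => Em dm m0; apply/smon_inP; split=> // j /fsetD1P[_ /Em].
  by move: size_m; rewrite (cardfsD1 i) iX add1n addnS ltnS.
- by apply: G_tau; case/smon_inP: Em => /(_ i iX).
- by apply/eqP/fsetP => j; rewrite !inE; case: eqVneq; rewrite ?andbF.
Qed.

End Span.

Lemma smon_sign_shift p u v w :
  (u.1 `&` v.1 == fset0)%fset -> (u.1 `&` w.1 == fset0)%fset ->
  smon_sign p (smon_mul u v) w * smon_sign p u (smon_mul v w) =
    smon_sign p v w * smon_sign p u v.
Proof.
move=> uv0 uw0; have uvw0 : (u.1 `&` (smon_mul v w).1 == fset0)%fset.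
  by rewrite /= fsetIUr fsetU_eq0 uv0 uw0.
have := congr1 (fun x => smon_sign p u v * x * smon_sign p u (smon_mul v w))
  (smon_sign_cocycle p u v w).
rewrite /= mulrA smon_sign_sqr // mul1r => ->.
by rewrite -[RHS]mulr1 -(smon_sign_sqr p uvw0); ring.
Qed.

Section SteenrodCoordinates.
Variables (p : nat) (EM ES : pred nat) (dM dS : nat).
Hypotheses (dM_dvd_dS : (dM %| dS)%N) (ES_EM : forall i, ES i -> EM i).
Local Notation stA := (stAp p).
Local Notation sign := (smon_sign p).
Local Notation PM := (smon_in EM dM).
Local Notation PS := (smon_in ES dS).
Local Notation low := (smon_low ES dS).
Local Notation high := (smon_high ES dS).
Implicit Types (a s : stA) (b m : smon).

(* junk value 0 when [b] is not a monomial of the larger algebra *)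
Definition smon_basis b : stA := if PM b then << b >> else 0.

(* the sign cancels the one of [stmul << b >> << high m >>] when [low m = b] *)
Definition smon_coord_mon b m : stA :=
  if low m == b then << sign b (high m) *g high m >> else 0.

Definition smon_coord b : stA -> stA := mlin (smon_coord_mon b).
HB.instance Definition _ b := GRing.Linear.copy (smon_coord b) (mlin (smon_coord_mon b)).

Definition smon_coord_supp a : {fset smon} := (low @` msupp a)%fset.

Lemma msupp_in_coord b a : msupp_in PM a -> msupp_in PS (smon_coord b a).
Proof.
move=> PMa; rewrite /smon_coord /mlin big_seq; apply: msupp_in_sum => m /PMa PMm.
apply: msupp_inZ; rewrite /smon_coord_mon; case: ifP => _; last exact: msupp_in0.
exact/msupp_inU/(smon_in_high _ _ PMm).
Qed.

Lemma smon_coord_monM b m1 m2 : PS m2 ->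
  smon_coord b (stmul << m1 >> << m2 >>) = stmul (smon_coord_mon b m1) << m2 >>.
Proof.
move=> PSm2; rewrite stmulU linearZ /= /smon_coord mlinU scale1r /smon_coord_mon.
rewrite smon_lowM // smon_highM //; case: eqVneq => [<-|_]; last first.
  by rewrite scaler0 stmul0l.
rewrite stmulUU scale_malgU mulr1.
have := smon_sign_shift p (smon_low_high_disjoint ES dS m1) (smon_low_disjoint m1 PSm2).
by rewrite smon_low_high => ->.
Qed.

Lemma smon_coordM b a s : msupp_in PS s ->
  smon_coord b (stmul a s) = stmul (smon_coord b a) s.
Proof.
move=> PSs; rewrite stmulE raddf_sum /= [in RHS]/smon_coord /mlin stmul_suml.
apply: eq_bigr => m1 _; rewrite raddf_sum /= stmulZl [in RHS](monalgE s) stmul_sumr.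
rewrite scaler_sumr big_seq [RHS]big_seq; apply: eq_bigr => m2 /PSs PSm2.
by rewrite linearZ /= (malgUZ (s@_m2)) stmulZr scalerA smon_coord_monM.
Qed.

Lemma smon_basis_expansion a (L : {fset smon}) : msupp_in PM a ->
  (smon_coord_supp a `<=` L)%fset -> a = \sum_(b <- L) stmul (smon_basis b) (smon_coord b a).
Proof.
move=> PMa le_aL.
have coord_term b : stmul (smon_basis b) (smon_coord b a) =
    \sum_(m <- msupp a) a@_m *: (if low m == b then << m >> else 0).
  rewrite /smon_coord /mlin /smon_basis; case: ifP => PMb.
    rewrite stmul_sumr big_seq [RHS]big_seq; apply: eq_bigr => m _.
    rewrite stmulZr /smon_coord_mon; case: eqP => [<-|_]; last by rewrite stmul0r.
    by rewrite stmulUU mulr1 smon_sign_sqr ?smon_low_high ?smon_low_high_disjoint.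
  rewrite stmul0l big_seq big1 // => m am; case: eqP => [low_m|_]; last by rewrite scaler0.
  by move: PMb; rewrite -low_m smon_in_low ?PMa.
rewrite (eq_bigr _ (fun b _ => coord_term b)) exchange_big /= {1}(monalgE a).
rewrite big_seq [RHS]big_seq; apply: eq_bigr => m am.
rewrite -scaler_sumr malgUZ; congr (_ *: _).
have lowL : low m \in L by apply/(fsubsetP le_aL)/imfsetP; exists m.
rewrite (big_fsetD1 (low m)) //= eqxx big1_seq ?addr0 // => b /andP[_].
by rewrite in_fsetD1 eq_sym => /andP[/negPf ->].
Qed.

Lemma smon_coord1 : smon_coord (fset0, mone) (stone p) = stone p.
Proof.
rewrite /smon_coord /stone mlinU scale1r /smon_coord_mon smon_low1 smon_high1 eqxx.
by rewrite /smon_sign /= fsetI0 eqxx /ext_cross big_seq_fset0.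
Qed.

Theorem msupp_in_faithfully_flat (M S : stA -> Prop) :
  (forall f, M f <-> msupp_in PM f) -> (forall f, S f <-> msupp_in PS f) ->
  faithfully_flat_over (@stmul p) (stone p) M S.
Proof.
move=> ME SE; have SM f : S f -> M f.
  by move=> /SE PSf; apply/ME => m /PSf; apply: smon_inS.
apply: (@dual_basis_faithfully_flat _ _ _ _ _ _ smon_basis smon_coord smon_coord_supp
          _ _ _ _ _ _ _ _ _ (fset0, mone)).
- exact/ME/msupp_in0.
- by move=> a a' /ME Ma /ME Ma'; apply/ME/msupp_inD.
- by move=> a s /ME Ma /SM/ME Ms; apply/ME; exact: msupp_in_mul (@smon_inM EM dM) Ma Ms.
- move=> b; apply/ME; rewrite /smon_basis; case: ifP => PMb.
    exact: msupp_inU.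
  exact: msupp_in0.
- by move=> b a /ME Ma; apply/SE/msupp_in_coord.
- by move=> b a a' _ _; apply: raddfD.
- by move=> b a s _ /SE; apply: smon_coordM.
- by move=> a L /ME; apply: smon_basis_expansion.
- exact/ME/msupp_inU/smon_in1.
- exact: smon_coord1.
Qed.

End SteenrodCoordinates.

(* The indices i of the exterior generators tau_i of A_p<k>_*, where k = 0
   stands for the whole dual Steenrod algebra. *)
Definition steenrod_ext (p k : nat) : pred nat :=
  fun i => (p != 2%N) && ((k == 0%N) || (k == 1%N) && (i == 0%N)).

Lemma steenrod_ext_succ p k i : steenrod_ext p k.+1 i -> steenrod_ext p k i.
Proof. by rewrite /steenrod_ext; case: k => [|k] /andP[-> //]. Qed.

Section Generators.
Variable p : nat.
Local Notation stA := (stAp p).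
Local Notation gen G := (gen_subring (@stmul p) (stone p) G).

Lemma stpow_txi i n : stpow (txi p i) n = << (fset0, ucmX i n) >>.
Proof.
elim: n => [//|n IH]; rewrite [stpow _ _]/= IH stmulUU !mulr1.
have -> : smon_sign p (fset0, ucm i) (fset0, ucmX i n) = 1.
  by rewrite /smon_sign /= fsetI0 eqxx /ext_cross big_seq_fset0 expr0.
have -> : smon_mul (fset0, ucm i) (fset0, ucmX i n) = (fset0, ucmX i n.+1).
  by rewrite /smon_mul /= fsetU0.
by apply/malgP => k; rewrite !mcoeffU.
Qed.

Lemma txiE i : txi p i = stpow (txi p i) 1.
Proof.
rewrite stpow_txi (_ : ucmX i 1 = ucm i); last by apply/eqP/cmP => j; rewrite ucmXE cmU mul1n.
by apply/malgP => k; rewrite !mcoeffU.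
Qed.

Definition steenrod_gen (E : pred nat) (d : nat) (a : stA) : Prop :=
  (exists2 i, E i & a = ttau p i) \/ (exists2 i, (0 < i)%N & a = stpow (txi p i) d).

Lemma gen_subringE (G : stA -> Prop) (E : pred nat) d : (0 < d)%N ->
  (forall a, G a <-> steenrod_gen E d a) ->
  forall f, gen G f <-> msupp_in (smon_in E d) f.
Proof.
move=> d_gt0 GE f; split.
  apply: (gen_msupp_in (smon_in1 E d) (@smon_inM E d)) => a /GE[[i Ei ->]|[i i_gt0 ->]].
    exact/msupp_inU/smon_in_tau.
  by rewrite stpow_txi; apply/msupp_inU/smon_in_ucmX.
apply: msupp_in_gen; apply: gen_smon_in d_gt0 _ _ => i Hi; apply/gen_base/GE.
  by left; exists i.
by right; exists i; rewrite ?stpow_txi.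
Qed.

Lemma dualSteenrodE f :
  @dualSteenrod p f <-> msupp_in (smon_in (steenrod_ext p 0) (p ^ 0)) f.
Proof.
apply: gen_subringE => // a; rewrite /steenrod_gen /steenrod_ext.
have [p2|p_neq2] := eqVneq p 2%N.
  split=> [[i i_gt0 ->]|[[i //]|[i i_gt0 ->]]]; [right|]; exists i => //.
    exact: txiE.
  by rewrite -txiE.
split=> [[[i ->]|[i i_gt0 ->]]|[[i _ ->]|[i i_gt0 ->]]].
- by left; exists i.
- by right; exists i => //; apply: txiE.
- by left; exists i.
- by right; exists i; rewrite -?txiE.
Qed.

Lemma dualSteenrodkE k f : (0 < p)%N -> (0 < k)%N ->
  @dualSteenrodk p k f <-> msupp_in (smon_in (steenrod_ext p k) (p ^ k)) f.
Proof.
move=> p_gt0 k_gt0; apply: gen_subringE; first by rewrite expn_gt0 p_gt0.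
move=> a; rewrite /steenrod_gen /steenrod_ext.
have [p2|p_neq2] := eqVneq p 2%N.
  have pk : (2 ^ k)%N = (p ^ k)%N by rewrite p2.
  rewrite pk /=.
  by split=> [[i i_gt0 ->]|[[i //]|[i i_gt0 ->]]]; [right|]; exists i.
rewrite /=; case: k k_gt0 => [//|[|k]] _ /=.
  split=> [[->|[i i_gt0 ->]]|[[i /eqP -> ->]|[i i_gt0 ->]]].
  - by left; exists 0%N.
  - by right; exists i.
  - by left.
  - by right; exists i.
by split=> [[i i_gt0 ->]|[[i //]|[i i_gt0 ->]]]; [right|]; exists i.
Qed.

End Generators.

Lemma steenrod_succ_faithfully_flat p k (M S : stAp p -> Prop) :
  (forall f, M f <-> msupp_in (smon_in (steenrod_ext p k) (p ^ k)) f) ->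
  (forall f, S f <-> msupp_in (smon_in (steenrod_ext p k.+1) (p ^ k.+1)) f) ->
  faithfully_flat_over (@stmul p) (stone p) M S.
Proof. by apply: msupp_in_faithfully_flat; [rewrite dvdn_exp2l | apply: steenrod_ext_succ]. Qed.

Theorem proposition4p2 (p : nat) (p_prime : prime p) :
  faithfully_flat_over (@stmul p) (@stone p)
    (@dualSteenrod p) (@dualSteenrodk p 1) /\
  (forall k : nat, (1 <= k)%N ->
    faithfully_flat_over (@stmul p) (@stone p)
      (@dualSteenrodk p k) (@dualSteenrodk p k.+1)).
Proof.
have p_gt0 := prime_gt0 p_prime.
split=> [|k k_gt0]; apply: steenrod_succ_faithfully_flat => f.
- exact: dualSteenrodE.
- exact: dualSteenrodkE.
- exact: dualSteenrodkE.
- exact: dualSteenrodkE.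
Qed.
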